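(* Let $h$ be a $1$-times weak Lefschetz O-sequence, let $n=h_1$ and $R=K[x_1,\ldots,x_n]$. Then the monomial ideal $\mathcal{W}_{1}(h)\subset R$ is strongly stable.
   Context: $K$ is an infinite field of characteristic $0$. An O-sequence is a sequence of non-negative integers that is the Hilbert function of some standard graded $K$-algebra; a finite O-sequence $h: 1=h_0,h_1,\ldots,h_s$ with $h_s\neq 0$ (and $h_d=0$ for $d>s$) has length $s$. $h$ is unimodal if $h_0<h_1<\cdots<h_k\ge h_{k+1}\ge\cdots\ge h_s$ for some $k$; then $\Delta h$ denotes the sequence $1, h_1-h_0,\ldots,h_k-h_{k-1}$. $h$ is a ($1$-times) weak Lefschetz O-sequence if it is unimodal and $\Delta h$ is an O-sequence. Monomials are ordered with $x_1>x_2>\cdots>x_n$; ''rev-lex'' means the degree reverse lexicographic order. For an O-sequence $g$ with $g_1=n-1$, $\mathrm{Lex}(g)\subset R'=K[x_1,\ldots,x_{n-1}]$ is the lex-segment ideal: its degree-$d$ component is spanned by the largest $\dim R'_d-g_d$ monomials of degree $d$ in lexicographic order, so $R'/\mathrm{Lex}(g)$ has Hilbert function $g$. Construction of $\mathcal{W}_1(h)$: start with $I=\mathrm{Lex}(\Delta h)R$ (the extension to $R$). While the Hilbert function of $R/I$ differs from $h$, let $d_0$ be the least degree where they differ, set $r=\dim_K(R/I)_{d_0}-h_{d_0}$ (this is positive), and replace $I$ by $I$ plus the ideal generated by the $r$ largest (in rev-lex order) monomials of degree $d_0$ not in $I$. After finitely many steps $R/I$ has Hilbert function $h$; the resulting ideal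 is $\mathcal{W}_1(h)$. A monomial ideal $I$ is strongly stable if for every monomial $M\in I$ and every variable $x_k$ dividing $M$, $(x_i/x_k)M\in I$ for all $i<k$. *)

From HB Require Import structures.
From mathcomp Require Import all_boot all_order all_algebra.
From mathcomp Require Import mpoly.
Set Implicit Arguments. Unset Strict Implicit. Unset Printing Implicit Defensive.
Import GRing.Theory.
Local Open Scope ring_scope.

(* A standard graded K-algebra is (up to isomorphism) K[x_1..x_m]/I    *)
(* with I a homogeneous ideal.                                          *)

Definition is_ideal (K : fieldType) (m : nat) (I : {mpoly K[m]} -> Prop) :=
  [/\ I 0,
      (forall p q, I p -> I q -> I (p + q)) &
      (forall p q, I q -> I (p * q))].

Definition is_homog_ideal (K : fieldType) (m : nat) (I : {mpoly K[m]} -> Prop) :=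
  is_ideal I /\ forall p d, I p -> I (@pihomog m K mdeg d p).

(* dim_K (K[x_1..x_m]/I)_d = c : there are c homogeneous forms of degree d
   whose classes form a K-basis of (R/I)_d *)
Definition hilb_val (K : fieldType) (m : nat) (I : {mpoly K[m]} -> Prop)
    (d c : nat) : Prop :=
  exists p : 'I_c -> {mpoly K[m]},
  [/\ forall i, p i \is d.-homog,
      (forall a : 'I_c -> K, I (\sum_(i < c) a i *: p i) -> forall i, a i = 0) &
      (forall q : {mpoly K[m]}, q \is d.-homog ->
         exists a : 'I_c -> K, I (q - \sum_(i < c) a i *: p i))].

Definition O_sequence (K : fieldType) (h : nat -> nat) : Prop :=
  exists (m : nat) (I : {mpoly K[m]} -> Prop),
    is_homog_ideal I /\ forall d, hilb_val I d (h d).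

Definition finite_of_length (h : nat -> nat) (s : nat) : Prop :=
  [/\ h 0 = 1%N, h s <> 0%N & forall d, (s < d)%N -> h d = 0%N].

Definition unimodal_at (h : nat -> nat) (k : nat) : Prop :=
  (forall i, (i < k)%N -> (h i < h i.+1)%N) /\
  (forall i, (k <= i)%N -> (h i.+1 <= h i)%N).

Definition deltah (h : nat -> nat) (k : nat) (i : nat) : nat :=
  if i == 0%N then 1%N else if (i <= k)%N then (h i - h i.-1)%N else 0%N.

(* Monomials of K[x_1..x_n] are the multinomials 'X_{1..n}; x_1 is the
   variable of index 0.  A monomial ideal is represented by the (boolean)
   predicate of the monomials it contains.                               *)

Definition mons (n d : nat) : seq 'X_{1..n} :=
  [seq bmnm x | x <- enum {: 'X_{1..n < d.+1}} & mdeg (bmnm x) == d].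

Definition mdiv n (u a : 'X_{1..n}) : bool := [forall i, (u i <= a i)%N].

Definition lex_gt n (a b : 'X_{1..n}) : bool :=
  [exists i : 'I_n, [forall j : 'I_n, (j < i)%N ==> (a j == b j)] && (b i < a i)%N].
Definition lex_ge n (a b : 'X_{1..n}) : bool := (a == b) || lex_gt a b.

Definition revlex_gt n (a b : 'X_{1..n}) : bool :=
  (mdeg b < mdeg a)%N ||
  ((mdeg a == mdeg b) &&
   [exists i : 'I_n, [forall j : 'I_n, (i < j)%N ==> (a j == b j)] && (a i < b i)%N]).
Definition revlex_ge n (a b : 'X_{1..n}) : bool := (a == b) || revlex_gt a b.

Definition largest T (ge : rel T) (r : nat) (s : seq T) : seq T :=
  take r (sort ge s).

(* degree-d component of Lex(g) in R' = K[x_1..x_{n-1}] (here R' has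
   n' variables): the dim R'_d - g_d lex-largest monomials of degree d *)
Definition lex_comp (n' : nat) (g : nat -> nat) (d : nat) : seq 'X_{1..n'} :=
  largest (@lex_ge n') (size (mons n' d) - g d) (mons n' d).

Definition restr n (a : 'X_{1..n}) : 'X_{1..n.-1} :=
  [multinom a (widen_ord (leq_pred n) i) | i < n.-1].

(* a is in the extension Lex(g)R, the ideal of R generated by Lex(g):
   some element of Lex(g) divides a (such a divisor has degree <= deg a) *)
Definition in_lex_ext n (g : nat -> nat) (a : 'X_{1..n}) : bool :=
  has (fun e => has (fun u => mdiv u (restr a)) (lex_comp n.-1 g e))
      (iota 0 (mdeg a).+1).

(* The least degree where HF(R/I) and h differ
   increases during the algorithm, so it processes degrees 0,1,2,...
   in turn.  [w1_added n h k d] = monomials added as new generators in the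
   steps concerning degrees < d.  Here k is the peak of h (Delta h = deltah h k). *)
Fixpoint w1_added (n : nat) (h : nat -> nat) (k : nat) (d : nat) : seq 'X_{1..n} :=
  match d with
  | 0 => [::]
  | d'.+1 =>
    let prev := w1_added n h k d' in
    let inI (a : 'X_{1..n}) :=
      in_lex_ext (deltah h k) a || has (fun u => mdiv u a) prev in
    let cands := [seq a <- mons n d' | ~~ inI a] in
    (* r = dim_K (R/I)_{d'} - h_{d'} *)
    let r := (size cands - h d')%N in
    prev ++ largest (@revlex_ge n) r cands
  end.

Definition W1 (n : nat) (h : nat -> nat) (k : nat) (a : 'X_{1..n}) : bool :=
  in_lex_ext (deltah h k) a ||
  has (fun u => mdiv u a) (w1_added n h k (mdeg a).+1).

(* (x_i / x_j) * a, for x_j dividing a *)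
Definition mshift n (i j : 'I_n) (a : 'X_{1..n}) : 'X_{1..n} :=
  [multinom (if l == i then (a l).+1 else if l == j then (a l).-1 else a l) | l < n].

Definition strongly_stable n (I : pred 'X_{1..n}) : Prop :=
  forall (a : 'X_{1..n}) (j : 'I_n), I a -> (0 < a j)%N ->
    forall i : 'I_n, (i < j)%N -> I (mshift i j a).

(* The lex segment is strongly stable because [x_i/x_j] maps a monomial to a
   lex-larger one of the same degree, and it stays so after extension to
   [K[x_1..x_n]] (a shift involving [x_n] only enlarges the [x_n]-free part).
   The monomials added in degree [d] are the revlex-largest candidates, and
   [x_i/x_j] with [i < j] raises revlex order within a degree; so the shift of
   an added generator is either already in the ideal or another chosen
   candidate.  Strong stability then passes from generators to the whole
   monomial ideal. *)

From HB Require Import structures.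
From mathcomp Require Import all_boot all_order all_algebra.
From mathcomp Require Import mpoly zify.
Set Implicit Arguments. Unset Strict Implicit. Unset Printing Implicit Defensive.

Section Largest.
Variables (T : eqType) (ge : rel T).
Hypotheses (ge_total : total ge) (ge_trans : transitive ge).

Lemma mem_largest_above r (s : seq T) x y :
  x \in largest ge r s -> y \in s -> ~~ ge x y -> y \in largest ge r s.
Proof.
rewrite /largest => xr ys xy.
have : sorted ge (take r (sort ge s) ++ drop r (sort ge s)).
  by rewrite cat_take_drop sort_sorted.
rewrite sorted_pairwise // pairwise_cat => /and3P[/allrelP take_ge_drop _ _].
have : y \in take r (sort ge s) ++ drop r (sort ge s).
  by rewrite cat_take_drop mem_sort.
rewrite mem_cat => /orP[//|yd].
by rewrite (take_ge_drop _ _ xr yd) in xy.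
Qed.

End Largest.

Section ReflexiveClosure.
Variables (T : eqType) (gt : rel T).
Hypotheses (gt_trans : transitive gt) (gt_irr : irreflexive gt).
Hypothesis gt_total : forall a b, a != b -> gt a b || gt b a.

Definition eq_or_gt : rel T := fun a b => (a == b) || gt a b.

Lemma eq_or_gt_total : total eq_or_gt.
Proof.
move=> a b; case: (eqVneq a b) => [->|neq]; first by rewrite /eq_or_gt eqxx.
by rewrite /eq_or_gt (negbTE neq) eq_sym (negbTE neq) gt_total.
Qed.

Lemma eq_or_gt_trans : transitive eq_or_gt.
Proof.
move=> b a c /orP[/eqP->//|ab] /orP[/eqP<-|bc]; rewrite /eq_or_gt.
  by rewrite ab orbT.
by rewrite (gt_trans ab bc) orbT.
Qed.

Lemma gt_eq_or_gtF a b : gt b a -> ~~ eq_or_gt a b.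
Proof.
move=> ba; rewrite /eq_or_gt negb_or; apply/andP; split.
  by apply: contraTneq ba => ->; rewrite gt_irr.
by apply/negP => ab; have := gt_irr a; rewrite (gt_trans ab ba).
Qed.

End ReflexiveClosure.

Section FirstDifference.
Variables (n : nat) (f : 'I_n -> nat).
Hypothesis f_inj : injective f.
Implicit Types a b : 'X_{1..n}.

Definition first_diff_gt a b : bool :=
  [exists i, [forall j, (f j < f i) ==> (a j == b j)] && (b i < a i)].

Lemma first_diff_gt_trans : transitive first_diff_gt.
Proof.
move=> b a c /existsP[i /andP[/forallP ab_below ba_i]].
move=> /existsP[i' /andP[/forallP bc_below cb_i']].
have ab j : f j < f i -> a j = b j by move=> lt; apply/eqP/(implyP (ab_below j)).
have bc j : f j < f i' -> b j = c j by move=> lt; apply/eqP/(implyP (bc_below j)).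
apply/existsP; case: (ltngtP (f i) (f i')) => [lt|lt|/f_inj eq_ii'].
- exists i; apply/andP; split; last by rewrite -bc.
  by apply/forallP => j; apply/implyP => lt_j; rewrite ab // bc // (ltn_trans lt_j).
- exists i'; apply/andP; split; last by rewrite ab.
  by apply/forallP => j; apply/implyP => lt_j; rewrite ab ?bc // (ltn_trans lt_j).
- subst i'; exists i; apply/andP; split; last exact: ltn_trans cb_i' ba_i.
  by apply/forallP => j; apply/implyP => lt_j; rewrite ab ?bc.
Qed.

Lemma first_diff_gt_irr : irreflexive first_diff_gt.
Proof. by move=> a; apply/existsP => -[i /andP[_]]; rewrite ltnn. Qed.

Lemma first_diff_gt_total a b : a != b -> first_diff_gt a b || first_diff_gt b a.
Proof.
move=> neq; have [i0 ab_i0] : exists i, a i != b i.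
  by apply/existsP; apply: contraNT neq => /existsPn eq_ab; apply/eqP/mnmP => i;
     apply/eqP; rewrite -[_ == _]negbK eq_ab.
case: (@arg_minnP _ i0 (fun i => a i != b i) f ab_i0) => i ab_i first_i.
have ab_below j : (f j < f i) ==> (a j == b j).
  by apply/implyP; apply: contraTT; rewrite -leqNgt; apply: first_i.
case: (ltngtP (a i) (b i)) => [lt|lt|eq]; last by rewrite eq eqxx in ab_i.
- apply/orP; right; apply/existsP; exists i; rewrite lt andbT.
  by apply/forallP => j; rewrite eq_sym ab_below.
- apply/orP; left; apply/existsP; exists i; rewrite lt andbT.
  by apply/forallP => j; rewrite ab_below.
Qed.

End FirstDifference.

Section MonomialOrders.
Variable n : nat.
Implicit Types a b : 'X_{1..n}.

Let index (i : 'I_n) := nat_of_ord i.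
Let rev_index (i : 'I_n) := n - i.

(* The degree-tie case of revlex compares from the last variable, and the
   monomial with the smaller exponent there is the larger one. *)
Lemma revlex_gtE a b :
  revlex_gt a b =
  (mdeg b < mdeg a) || (mdeg a == mdeg b) && first_diff_gt rev_index b a.
Proof.
congr (_ || (_ && _)); apply: eq_existsb => i; congr (_ && _).
apply: eq_forallb => j; rewrite eq_sym /rev_index ltn_sub2lE //.
exact: ltnW.
Qed.

Lemma index_inj : injective index. Proof. exact: val_inj. Qed.

Lemma rev_index_inj : injective rev_index.
Proof.
move=> i j; rewrite /rev_index => eq_ij; apply: val_inj => /=.
move: eq_ij (ltn_ord i) (ltn_ord j); lia.
Qed.

Lemma lex_gt_trans : transitive (@lex_gt n).
Proof. exact: first_diff_gt_trans index_inj. Qed.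

Lemma lex_gt_irr : irreflexive (@lex_gt n).
Proof. exact: first_diff_gt_irr. Qed.

Lemma lex_gt_total a b : a != b -> lex_gt a b || lex_gt b a.
Proof. exact: first_diff_gt_total. Qed.

Lemma revlex_gt_trans : transitive (@revlex_gt n).
Proof.
move=> b a c; rewrite !revlex_gtE.
case/orP=> [lt_ba|/andP[/eqP eq_ab ba]]; case/orP=> [lt_cb|/andP[/eqP eq_bc cb]].
- by rewrite (ltn_trans lt_cb lt_ba).
- by rewrite -eq_bc lt_ba.
- by rewrite eq_ab lt_cb.
- by rewrite eq_ab eq_bc eqxx (first_diff_gt_trans rev_index_inj cb ba) orbT.
Qed.

Lemma revlex_gt_irr : irreflexive (@revlex_gt n).
Proof. by move=> a; rewrite revlex_gtE ltnn first_diff_gt_irr andbF. Qed.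

Lemma revlex_gt_total a b : a != b -> revlex_gt a b || revlex_gt b a.
Proof.
move=> neq; rewrite !revlex_gtE eq_sym.
case: (ltngtP (mdeg b) (mdeg a)) => //= _.
by rewrite orbC first_diff_gt_total // eq_sym.
Qed.

Lemma lex_ge_total : total (@lex_ge n).
Proof. exact: eq_or_gt_total lex_gt_total. Qed.

Lemma lex_ge_trans : transitive (@lex_ge n).
Proof. exact: eq_or_gt_trans lex_gt_trans. Qed.

Lemma revlex_ge_total : total (@revlex_ge n).
Proof. exact: eq_or_gt_total revlex_gt_total. Qed.

Lemma revlex_ge_trans : transitive (@revlex_ge n).
Proof. exact: eq_or_gt_trans revlex_gt_trans. Qed.

End MonomialOrders.

Section Monomials.
Variable n : nat.
Implicit Types a b c u : 'X_{1..n}.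
Implicit Types i j : 'I_n.

Lemma mdivP u a : reflect (forall l, u l <= a l) (mdiv u a).
Proof. exact: forallP. Qed.

Lemma mdiv_refl a : mdiv a a.
Proof. by apply/mdivP. Qed.

Lemma mdiv_trans b a c : mdiv a b -> mdiv b c -> mdiv a c.
Proof. by move=> /mdivP ab /mdivP bc; apply/mdivP => l; apply: leq_trans (ab l) (bc l). Qed.

Lemma mdeg_mdiv u a : mdiv u a -> mdeg u <= mdeg a.
Proof. by move=> /mdivP ua; rewrite !mdegE; apply: leq_sum => l _. Qed.

Lemma mem_mons d a : (a \in mons n d) = (mdeg a == d).
Proof.
apply/idP/idP => [/mapP[x]|deg_a]; first by rewrite mem_filter => /andP[? _] ->.
have lt_deg : mdeg a < d.+1 by rewrite (eqP deg_a).
by apply/mapP; exists (BMultinom lt_deg); rewrite // mem_filter deg_a mem_enum.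
Qed.

Lemma mshiftE i j a l :
  mshift i j a l = if l == i then (a l).+1 else if l == j then (a l).-1 else a l.
Proof. exact: mnmE. Qed.

Lemma mdeg_mshift i j a : i != j -> 0 < a j -> mdeg (mshift i j a) = mdeg a.
Proof.
move=> nij aj; rewrite !mdegE (bigD1 i) //= (bigD1 j) 1?eq_sym //=.
rewrite [RHS](bigD1 i) //= [in RHS](bigD1 j) 1?eq_sym //=.
rewrite !mshiftE eqxx eq_sym (negbTE nij) eqxx.
rewrite (eq_bigr (fun l => a l)); last first.
  by move=> l /andP[li lj]; rewrite mshiftE (negbTE li) (negbTE lj).
by rewrite addSn -addnS -addSn prednK.
Qed.

Lemma mdiv_mshift i j u a : mdiv u a -> mdiv (mshift i j u) (mshift i j a).
Proof.
move=> /mdivP ua; apply/mdivP => l; rewrite !mshiftE.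
case: (l == i); first by rewrite ltnS.
by case: (l == j) => //; rewrite -!subn1 leq_sub2r.
Qed.

Lemma mdiv_mshiftr i j u a : i != j -> mdiv u a -> u j < a j -> mdiv u (mshift i j a).
Proof.
move=> nij /mdivP ua lt_j; apply/mdivP => l; rewrite mshiftE.
case: (eqVneq l i) => [->|_]; first exact: leqW.
by case: (eqVneq l j) => [->|_] //; rewrite -ltnS prednK // (leq_ltn_trans _ lt_j).
Qed.

Lemma lex_gt_mshift i j u : i < j -> lex_gt (mshift i j u) u.
Proof.
move=> ij; apply/existsP; exists i; rewrite mshiftE eqxx ltnSn andbT.
apply/forallP => l; apply/implyP => li; rewrite mshiftE.
by rewrite !ifN_eq // neq_ltn ?li ?(ltn_trans li ij).
Qed.

Lemma revlex_gt_mshift i j u : i < j -> 0 < u j -> revlex_gt (mshift i j u) u.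
Proof.
move=> ij uj; have nij : i != j by rewrite neq_ltn ij.
rewrite /revlex_gt mdeg_mshift // eqxx ltnn /=.
apply/existsP; exists j; rewrite mshiftE eq_sym (negbTE nij) eqxx prednK // leqnn.
apply/andP; split=> //; apply/forallP => l; apply/implyP => jl; rewrite mshiftE.
by rewrite !ifN_eq // neq_ltn ?jl ?(ltn_trans ij jl) orbT.
Qed.

(* For a set closed under multiples, shifting a divisor [u] of [a] suffices:
   either [u] still divides the shift of [a], or [u] and [a] have the same
   [x_j]-exponent and the shift of [u] divides the shift of [a]. *)
Lemma mshift_via_divisor (I : pred 'X_{1..n}) i j u a :
  (forall b c, mdiv b c -> I b -> I c) -> i != j ->
  mdiv u a -> 0 < a j -> I u -> (0 < u j -> I (mshift i j u)) ->
  I (mshift i j a).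
Proof.
move=> I_mul nij ua aj Iu I_shift_u.
have [lt_j|ge_j] := ltnP (u j) (a j); first exact: I_mul (mdiv_mshiftr nij ua lt_j) Iu.
have eq_j : u j = a j by apply/eqP; rewrite eqn_leq ge_j (mdivP _ _ ua).
by apply: I_mul (mdiv_mshift i j ua) _; apply: I_shift_u; rewrite eq_j.
Qed.

End Monomials.

Definition in_ideal n (G : seq 'X_{1..n}) (a : 'X_{1..n}) : bool :=
  has (fun u => mdiv u a) G.

Section Ideals.
Variable n : nat.
Implicit Types (G : seq 'X_{1..n}) (a b u : 'X_{1..n}).

Lemma in_idealP G a : reflect (exists2 u, u \in G & mdiv u a) (in_ideal G a).
Proof. exact: hasP. Qed.

Lemma in_ideal_mdiv G a b : mdiv a b -> in_ideal G a -> in_ideal G b.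
Proof. by move=> ab /in_idealP[u uG ua]; apply/in_idealP; exists u; last exact: mdiv_trans ab. Qed.

Lemma in_ideal_gen G u : u \in G -> in_ideal G u.
Proof. by move=> uG; apply/in_idealP; exists u; last exact: mdiv_refl. Qed.

Lemma in_ideal_subset G G' a : {subset G <= G'} -> in_ideal G a -> in_ideal G' a.
Proof. by move=> sGG' /in_idealP[u /sGG' uG' ua]; apply/in_idealP; exists u. Qed.

End Ideals.

Lemma lex_comp_mshift n g e (i j : 'I_n) (u : 'X_{1..n}) :
  i < j -> 0 < u j -> u \in lex_comp n g e -> mshift i j u \in lex_comp n g e.
Proof.
move=> ij uj u_lex; have nij : i != j by rewrite neq_ltn ij.
apply: (mem_largest_above (@lex_ge_total n) (@lex_ge_trans n) u_lex).
  move: u_lex => /mem_take; rewrite mem_sort !mem_mons mdeg_mshift //.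
exact (gt_eq_or_gtF (@lex_gt_trans n) (@lex_gt_irr n) (lex_gt_mshift u ij)).
Qed.

Section LexExtension.
Variables (n : nat) (g : nat -> nat).
Implicit Types a b : 'X_{1..n}.
Implicit Types i j : 'I_n.

Local Notation widen := (widen_ord (leq_pred n)).

Lemma restrE a l : restr a l = a (widen l).
Proof. exact: mnmE. Qed.

Lemma mdiv_restr a b : mdiv a b -> mdiv (restr a) (restr b).
Proof. by move=> /mdivP ab; apply/mdivP => l; rewrite !restrE. Qed.

Lemma in_lex_extE a :
  in_lex_ext g a = has (fun e => in_ideal (lex_comp n.-1 g e) (restr a)) (iota 0 (mdeg a).+1).
Proof. by []. Qed.

Lemma in_lex_ext_mdiv a b : mdiv a b -> in_lex_ext g a -> in_lex_ext g b.
Proof.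
move=> ab; rewrite !in_lex_extE => /hasP[e e_le a_in]; apply/hasP; exists e.
  by move: e_le; rewrite !mem_iota !add0n !ltnS => /leq_trans; apply; apply: mdeg_mdiv.
exact: in_ideal_mdiv (mdiv_restr ab) a_in.
Qed.

Lemma restr_mshift (i j : 'I_n.-1) a :
  restr (mshift (widen i) (widen j) a) = mshift i j (restr a).
Proof.
have eq_widen (x y : 'I_n.-1) : (widen x == widen y) = (x == y) by [].
by apply/mnmP => l; rewrite restrE !mshiftE restrE !eq_widen.
Qed.

Lemma mdiv_restr_mshift_last i j a : n.-1 <= j -> mdiv (restr a) (restr (mshift i j a)).
Proof.
move=> last_j; apply/mdivP => l; rewrite !restrE mshiftE.
case: ifP => // _; rewrite ifN_eq // neq_ltn /=.
by rewrite (leq_trans (ltn_ord l) last_j).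
Qed.

Lemma in_lex_ext_mshift a i j : i < j -> 0 < a j ->
  in_lex_ext g a -> in_lex_ext g (mshift i j a).
Proof.
move=> ij aj; have nij : i != j by rewrite neq_ltn ij.
rewrite !in_lex_extE mdeg_mshift // => /hasP[e e_le a_in]; apply/hasP; exists e => //.
have [lt_j|last_j] := ltnP j n.-1; last first.
  exact: in_ideal_mdiv (mdiv_restr_mshift_last i a last_j) a_in.
pose i' : 'I_n.-1 := Ordinal (ltn_trans ij lt_j); pose j' : 'I_n.-1 := Ordinal lt_j.
have [wi wj] : i = widen i' /\ j = widen j' by split; apply: val_inj.
have [u u_lex ua] := in_idealP _ _ a_in.
rewrite wi wj restr_mshift; apply: (mshift_via_divisor (@in_ideal_mdiv _ _) _ ua).
- by rewrite neq_ltn /= ij.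
- by rewrite restrE -wj.
- exact: in_ideal_gen.
- by move=> uj; apply/in_ideal_gen/lex_comp_mshift.
Qed.

End LexExtension.

Section W1.
Variables (n : nat) (h : nat -> nat) (k : nat).
Implicit Types a u : 'X_{1..n}.
Implicit Types i j : 'I_n.

Local Notation added := (w1_added n h k).
Local Notation in_lex := (in_lex_ext (deltah h k)).

Definition w1_candidates d :=
  [seq a <- mons n d | ~~ (in_lex a || in_ideal (added d) a)].

Definition w1_new d :=
  largest (@revlex_ge n) (size (w1_candidates d) - h d) (w1_candidates d).

Lemma w1_addedS d : added d.+1 = added d ++ w1_new d.
Proof. by []. Qed.

Lemma W1E a : W1 h k a = in_lex a || in_ideal (added (mdeg a).+1) a.
Proof. by []. Qed.

Lemma w1_added_mono d d' : d <= d' -> {subset added d <= added d'}.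
Proof.
elim: d' => [|d' IH]; first by rewrite leqn0 => /eqP->.
rewrite leq_eqVlt => /orP[/eqP->//|]; rewrite ltnS => /IH sub u /sub.
by rewrite w1_addedS mem_cat => ->.
Qed.

Lemma mem_w1_added d u : u \in added d -> u \in w1_new (mdeg u).
Proof.
elim: d => [//|d IH]; rewrite w1_addedS mem_cat => /orP[/IH//|u_new].
have : u \in w1_candidates d by move: u_new => /mem_take; rewrite mem_sort.
by rewrite mem_filter mem_mons => /andP[_ /eqP->].
Qed.

Lemma W1_mdiv a b : mdiv a b -> W1 h k a -> W1 h k b.
Proof.
rewrite !W1E => ab /orP[a_lex|a_add]; first by rewrite (in_lex_ext_mdiv ab a_lex).
apply/orP; right; apply: (in_ideal_mdiv ab) (in_ideal_subset _ a_add).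
by apply: w1_added_mono; rewrite ltnS mdeg_mdiv.
Qed.

Lemma W1_added d u : u \in added d -> W1 h k u.
Proof.
move/mem_w1_added => u_new; rewrite W1E; apply/orP; right.
by apply: in_ideal_gen; rewrite w1_addedS mem_cat u_new orbT.
Qed.

(* A shifted generator is revlex-larger of the same degree, so it is either
   already in the ideal built so far or a candidate chosen along with [u]. *)
Lemma W1_mshift_added d u i j :
  u \in added d -> i < j -> 0 < u j -> W1 h k (mshift i j u).
Proof.
move=> /mem_w1_added u_new ij uj; have nij : i != j by rewrite neq_ltn ij.
set v := mshift i j u; have deg_v : mdeg v = mdeg u by rewrite mdeg_mshift.
rewrite W1E deg_v; case v_in : (in_lex v || in_ideal (added (mdeg u)) v).
  case/orP: v_in => [->//|v_add]; apply/orP; right.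
  exact: in_ideal_subset (w1_added_mono (leqnSn _)) v_add.
have v_cand : v \in w1_candidates (mdeg u) by rewrite mem_filter v_in mem_mons deg_v /=.
apply/orP; right; apply/in_ideal_gen; rewrite w1_addedS mem_cat; apply/orP; right.
apply: (mem_largest_above (@revlex_ge_total n) (@revlex_ge_trans n) u_new v_cand).
exact (gt_eq_or_gtF (@revlex_gt_trans n) (@revlex_gt_irr n) (revlex_gt_mshift ij uj)).
Qed.

Lemma W1_strongly_stable : strongly_stable (@W1 n h k).
Proof.
move=> a j Wa aj i ij; have nij : i != j by rewrite neq_ltn ij.
case/orP: Wa => [a_lex|/in_idealP[u u_add ua]]; first by rewrite W1E in_lex_ext_mshift.
apply: (mshift_via_divisor (I := W1 h k) (@W1_mdiv) nij ua aj (W1_added u_add)).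
exact: W1_mshift_added u_add ij.
Qed.

End W1.

Theorem lemma3p1 (K : fieldType) (h : nat -> nat) (s k n : nat) :
  [pchar K]%R =i pred0 ->
  finite_of_length h s ->
  O_sequence K h ->
  unimodal_at h k ->
  O_sequence K (deltah h k) ->
  n = h 1%N ->
  strongly_stable (@W1 n h k).
Proof. by move=> *; apply: W1_strongly_stable. Qed.
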